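(* For every positive integer $n$, there is a simple coalition game $\mathcal G$ over the $n\times n$ grid graph $R_n$ with $\dfrac{\rho^f(\mathcal G)}{\rho(\mathcal G)}\ge \tfrac12\tau(R_n)$.
   Context: $R_n$ is the grid graph on $\{1,\dots,n\}^2$ with $(i,j)\sim(i',j')$ iff $|i-i'|+|j-j'|=1$. Coalition game over $G=(V,E)$: a valuation $v:2^V\to\mathbb Z_{\ge0}$ with $v(\emptyset)=0$, $v(S)=0$ whenever $G[S]$ is disconnected, $v$ not identically zero; simple if values lie in $\{0,1\}$. $\rho^f(\mathcal G)=\max\{\sum_S v(S)y_S: y\ge0,\ \sum_{S\ni i}y_S\le1\ \forall i\}$, and $\rho(\mathcal G)$ the same maximum over $0/1$ vectors $y$. Thicket number $\tau(G)$: maximum, over collections $\mathcal H$ of nonempty, connected-inducing, pairwise intersecting vertex sets, of the minimum size of a set meeting every member of $\mathcal H$. *)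

From HB Require Import structures.
From mathcomp Require Import all_boot all_order all_algebra.
Set Implicit Arguments. Unset Strict Implicit. Unset Printing Implicit Defensive.
Import Order.TTheory GRing.Theory Num.Theory.

(* The grid graph R_n on {1..n}^2, with vertices encoded as 'I_n * 'I_n
   (coordinate k in {1..n} is represented by k-1). *)
Definition grid_V (n : nat) : finType := ('I_n * 'I_n)%type.

Definition grid_adj (n : nat) : rel (grid_V n) :=
  fun p q => (`|(p.1 : nat) - (q.1 : nat)| + `|(p.2 : nat) - (q.2 : nat)|)%N == 1%N.

(* G[S] is connected: any two vertices of S are joined by a path inside S.
   (The empty set is vacuously connected; this never matters below, since
   v(emptyset) = 0 is required separately and thicket members are nonempty.) *)
Definition induced_rel (T : finType) (e : rel T) (S : {set T}) : rel T :=
  fun x y => [&& e x y, x \in S & y \in S].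

Definition connected_set (T : finType) (e : rel T) (S : {set T}) : bool :=
  [forall x in S, forall y in S, connect (induced_rel e S) x y].

Definition coalition_game (T : finType) (e : rel T) (v : {set T} -> nat) : Prop :=
  [/\ v set0 = 0%N,
      (forall S : {set T}, ~~ connected_set e S -> v S = 0%N) &
      (exists S : {set T}, v S <> 0%N)].

Definition simple_game (T : finType) (e : rel T) (v : {set T} -> nat) : Prop :=
  coalition_game e v /\ (forall S : {set T}, (v S <= 1)%N).

(* rho(G): maximum of sum_S v(S) y_S over 0/1 vectors y (identified with the
   family F = {S | y_S = 1}) with sum_{S ni i} y_S <= 1 for every vertex i. *)
Definition int_packing (T : finType) (F : {set {set T}}) : bool :=
  [forall i : T, #|[set S in F | i \in S]| <= 1]%N.

Definition rho (T : finType) (v : {set T} -> nat) : nat :=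
  \max_(F : {set {set T}} | int_packing F) \sum_(S in F) v S.

Definition frac_packing (T : finType) (y : {ffun {set T} -> rat}) : Prop :=
  (forall S, 0 <= y S)%R /\ (forall i : T, \sum_(S : {set T} | i \in S) y S <= 1)%R.

Definition frac_value (T : finType) (v : {set T} -> nat) (y : {ffun {set T} -> rat}) : rat :=
  (\sum_(S : {set T}) (v S)%:R * y S)%R.

Definition is_rho_f (T : finType) (v : {set T} -> nat) (r : rat) : Prop :=
  (exists2 y, frac_packing y & frac_value v y = r) /\
  (forall y, frac_packing y -> (frac_value v y <= r)%R).

Definition thicket (T : finType) (e : rel T) (H : {set {set T}}) : bool :=
  [forall S in H, (S != set0) && connected_set e S] &&
  [forall S in H, forall S' in H, S :&: S' != set0].

Definition hitting_number (T : finType) (H : {set {set T}}) : nat :=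
  \big[minn/#|T|]_(X : {set T} | [forall S in H, X :&: S != set0]) #|X|.

Definition thicket_number (T : finType) (e : rel T) : nat :=
  \max_(H : {set {set T}} | thicket e H) hitting_number H.

From HB Require Import structures.
From mathcomp Require Import all_boot all_order all_algebra.
From mathcomp Require Import zify lra.
Import Order.TTheory GRing.Theory Num.Theory.
Set Implicit Arguments. Unset Strict Implicit. Unset Printing Implicit Defensive.

(* The game is the indicator of the n crosses C_i = (row i) U (column i), which are connected
   and pairwise intersecting, so rho = 1.  Every vertex lies in at most two crosses and, for
   n >= 2, every cross contains two points of the cyclic superdiagonal {(k, k+1)}; hence weight
   1/2 on each cross and weight 1/2 on each superdiagonal point are a fractional packing and a
   dual fractional cover of the same value n/2, so rho^f = n/2.  Conversely tau(R_n) <= n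
   because some row meets every member of a thicket: a connected set missing row r lies
   entirely above or entirely below it, and if every row were missed by some member, induction
   on r would give a member lying above the last row. *)

Section InducedConnectivity.

Variables (T : finType) (e : rel T).
Hypothesis e_sym : symmetric e.

Lemma induced_rel_sym (S : {set T}) : symmetric (induced_rel e S).
Proof. by move=> x y; rewrite /induced_rel e_sym (andbC (x \in S)). Qed.

Lemma connected_set_closed (S : {set T}) (a : {pred T}) x y :
  connected_set e S -> closed (induced_rel e S) a -> x \in S -> y \in S ->
  (x \in a) = (y \in a).
Proof.
move=> /forallP /(_ x) /implyP Sc a_cl xS yS.
have /forallP /(_ y) /implyP /(_ yS) := Sc xS.
by move=> /(closed_connect a_cl).
Qed.

Lemma connected_set_hub (S : {set T}) c :
  (forall x, x \in S -> connect (induced_rel e S) x c) -> connected_set e S.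
Proof.
move=> to_c; apply/forallP => x; apply/implyP => xS; apply/forallP => y.
apply/implyP => yS; apply: connect_trans (to_c x xS) _.
by rewrite (sym_connect_sym (@induced_rel_sym S)) to_c.
Qed.

End InducedConnectivity.

Lemma connect_chain (T : finType) (e : rel T) (f : nat -> T) N j k :
  connect_sym e -> (forall i, i < N -> e (f i) (f i.+1)) ->
  j <= N -> k <= N -> connect e (f j) (f k).
Proof.
move=> e_sym f_e.
have from0 i : i <= N -> connect e (f 0) (f i).
  elim: i => [|i IHi] iN; first exact: connect0.
  exact: connect_trans (IHi (ltnW iN)) (connect1 (f_e i iN)).
by move=> jN kN; rewrite (connect_trans _ (from0 k kN)) // e_sym from0.
Qed.

Lemma grid_adj_sym n : symmetric (@grid_adj n).
Proof. by move=> p q; rewrite /grid_adj distnC [X in (_ + X)%N]distnC. Qed.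

Definition rowset n (r : 'I_n) : {set grid_V n} := setX [set r] [set: 'I_n].

Lemma mem_rowset n (r : 'I_n) z : (z \in rowset r) = (z.1 == r).
Proof. by case: z => a b; rewrite in_setX in_set1 inE andbT. Qed.

Lemma card_rowset n (r : 'I_n) : #|rowset r| = n.
Proof. by rewrite cardsX cards1 cardsT card_ord mul1n. Qed.

Lemma hitting_number_le (T : finType) (H : {set {set T}}) X :
  [forall S in H, X :&: S != set0] -> hitting_number H <= #|X|.
Proof.
move=> hX; rewrite /hitting_number.
have : X \in index_enum {set T} by rewrite mem_index_enum.
elim: (index_enum _) => [//|Y s IHs]; rewrite inE big_cons => /orP [/eqP <-|Xs].
  by rewrite hX geq_minl.
by case: ifP => _; [exact: leq_trans (geq_minr _ _) (IHs Xs) | exact: IHs].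
Qed.

(* A grid edge changes the row index by at most one, so it cannot jump over a missing row. *)
Lemma connected_row_side n (S : {set grid_V n}) (r : nat) x y :
  connected_set (@grid_adj n) S -> (forall z, z \in S -> z.1 != r :> nat) ->
  x \in S -> y \in S -> (x.1 < r) = (y.1 < r).
Proof.
move=> Sc Sr xS yS.
suff a_cl : closed (induced_rel (@grid_adj n) S) [pred z : grid_V n | z.1 < r].
  exact: (connected_set_closed Sc a_cl xS yS).
move=> p q /and3P [/eqP pq pS qS]; rewrite !inE.
move: pq (Sr p pS) (Sr q qS); case: p q {pS qS} => [[p1 ?] [p2 ?]] [[q1 ?] [q2 ?]] /=.
by lia.
Qed.

Lemma thicket_member_nonempty (T : finType) (e : rel T) H S :
  thicket e H -> S \in H -> exists x, x \in S.
Proof. by case/andP=> /forallP /(_ S) /implyP Hne _ /Hne /andP [/set0Pn]. Qed.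

Lemma thicket_member_connected (T : finType) (e : rel T) H S :
  thicket e H -> S \in H -> connected_set e S.
Proof. by case/andP=> /forallP /(_ S) /implyP Hc _ /Hc /andP []. Qed.

Lemma thicket_members_meet (T : finType) (e : rel T) H S S' :
  thicket e H -> S \in H -> S' \in H -> S :&: S' != set0.
Proof. by case/andP=> _ /forall_inP Hm /Hm /forall_inP; apply. Qed.

Section ThicketMeetsARow.

Variables (n : nat) (H : {set {set grid_V n}}).
Hypothesis H_thicket : thicket (@grid_adj n) H.
Hypothesis H_miss : forall r, r < n ->
  exists2 S, S \in H & forall z, z \in S -> z.1 != r :> nat.

Lemma missing_row_side r S : S \in H -> (forall z, z \in S -> z.1 != r :> nat) ->
  (forall z, z \in S -> z.1 < r) \/ (forall z, z \in S -> r < z.1).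
Proof.
move=> SH Sr; have [x xS] := thicket_member_nonempty H_thicket SH.
have Sc := thicket_member_connected H_thicket SH.
have side z : z \in S -> (z.1 < r) = (x.1 < r).
  by move=> zS; exact: connected_row_side Sc Sr zS xS.
have := Sr x xS; rewrite neq_ltn => /orP [xr|rx]; [left|right] => z zS.
  by rewrite side // xr.
by have := Sr z zS; rewrite neq_ltn side // ltnNge (ltnW rx).
Qed.

(* The member missing row k lies above it: lying below, it would miss a member lying above
   row k-1. *)
Lemma member_above_row k : k < n -> exists2 S, S \in H & forall z, z \in S -> k < z.1.
Proof.
elim: k => [|k IHk] kn; have [S SH Sr] := H_miss kn;
  case: (missing_row_side SH Sr) => [below|]; try by exists S.
  by have [x /below] := thicket_member_nonempty H_thicket SH.
have [S' S'H above] := IHk (ltnW kn).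
have /set0Pn [x] := thicket_members_meet H_thicket S'H SH.
by rewrite inE => /andP [/above xk /below]; rewrite ltnS leqNgt xk.
Qed.

End ThicketMeetsARow.

Lemma thicket_meets_row n H : 0 < n -> thicket (@grid_adj n) H ->
  exists r : 'I_n, [forall S in H, rowset r :&: S != set0].
Proof.
move=> n_gt0 Ht; apply/existsP/contraT => /existsPn no_row.
have miss r : r < n -> exists2 S, S \in H & forall z, z \in S -> z.1 != r :> nat.
  move=> rn; have /forall_inPn [S SH /negPn /eqP rS] := no_row (Ordinal rn).
  exists S => // z zS; apply: contraTneq isT => zr.
  suff : z \in rowset (Ordinal rn) :&: S by rewrite rS inE.
  by rewrite inE mem_rowset zS andbT -(inj_eq val_inj) /= zr.
have /(member_above_row Ht miss) [S SH above] : n.-1 < n by rewrite ltn_predL.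
have [x /above] := thicket_member_nonempty Ht SH.
by rewrite -ltnS prednK // ltnNge ltn_ord.
Qed.

Lemma thicket_number_grid_le n : 0 < n -> thicket_number (@grid_adj n) <= n.
Proof.
move=> n_gt0; apply/bigmax_leqP => H Ht.
have [r /hitting_number_le] := thicket_meets_row n_gt0 Ht.
by rewrite card_rowset.
Qed.

Definition family_game (T : finType) (W : {set {set T}}) (S : {set T}) : nat := S \in W.

Lemma rho_family_game_meet (T : finType) (W : {set {set T}}) :
  W != set0 -> (forall S S', S \in W -> S' \in W -> S :&: S' != set0) ->
  rho (family_game W) = 1.
Proof.
move=> /set0Pn [S0 S0W] W_meet; apply/eqP; rewrite eqn_leq; apply/andP; split.
  apply/bigmax_leqP => F /forallP F_pack.
  rewrite (eq_bigr (fun S => if S \in W then 1 else 0)); last first.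
    by move=> S _; rewrite /family_game; case: (S \in W).
  rewrite -big_mkcondr sum1_card leqNgt.
  apply/card_gt1P => -[S [S' [/andP [SF SW] /andP [S'F S'W] neq_SS']]].
  have /set0Pn [x] := W_meet _ _ SW S'W; rewrite inE => /andP [xS xS'].
  have := F_pack x; rewrite leqNgt => /negP; apply; apply/card_gt1P.
  by exists S, S'; rewrite !inE SF S'F xS xS'.
have S0_pack : int_packing [set S0].
  apply/forallP => x; rewrite -(cards1 S0) subset_leq_card //.
  by apply/subsetP => S; rewrite inE => /andP [].
by rewrite (leq_trans _ (leq_bigmax_cond _ S0_pack)) // big_set1 /family_game S0W.
Qed.

Definition cross n (i : 'I_n) : {set grid_V n} := [set x | (x.1 == i) || (x.2 == i)].

Definition crosses n : {set {set grid_V n}} := [set cross i | i : 'I_n].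

Lemma cross_connected n (i : 'I_n) : connected_set (@grid_adj n) (cross i).
Proof.
case: n i => [[] //|m] i.
set e := induced_rel (@grid_adj m.+1) (cross i).
have e_sym : connect_sym e by apply/sym_connect_sym/induced_rel_sym/grid_adj_sym.
have row_step k : k < m -> e (i, inord k) (i, inord k.+1).
  by move=> km; rewrite /e /induced_rel /grid_adj !inE /= eqxx !inordK //=; lia.
have col_step k : k < m -> e (inord k, i) (inord k.+1, i).
  by move=> km; rewrite /e /induced_rel /grid_adj !inE /= eqxx !orbT !inordK //=; lia.
apply: (connected_set_hub (@grid_adj_sym _) (c := (i, i))) => -[a b].
rewrite inE /= => /orP [/eqP ->|/eqP ->].
  by have := connect_chain e_sym row_step (ltn_ord b) (ltn_ord i); rewrite !inord_val.
by have := connect_chain e_sym col_step (ltn_ord a) (ltn_ord i); rewrite !inord_val.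
Qed.

Lemma mem_cross_diag n (i : 'I_n) : (i, i) \in cross i.
Proof. by rewrite inE eqxx. Qed.

Lemma cross_inj n : injective (@cross n).
Proof. by move=> i j eq_ij; move: (mem_cross_diag i); rewrite eq_ij inE orbb => /eqP. Qed.

Lemma card_crosses n : #|crosses n| = n.
Proof. by rewrite card_imset ?card_ord //; exact: cross_inj. Qed.

Lemma crosses_meet n S S' : S \in crosses n -> S' \in crosses n -> S :&: S' != set0.
Proof.
move=> /imsetP [i _ ->] /imsetP [j _ ->]; apply/set0Pn; exists (i, j).
by rewrite !inE !eqxx orbT.
Qed.

Lemma card_crosses_at n (x : grid_V n) : #|[set S in crosses n | x \in S]| <= 2.
Proof.
apply: leq_trans (subset_leq_card (_ : _ \subset [set cross x.1; cross x.2])) _.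
  apply/subsetP => S; rewrite !inE => /andP [/imsetP [i _ ->]].
  by rewrite !inE => /orP [] /eqP <-; rewrite eqxx ?orbT.
by rewrite cards2; case: (_ != _).
Qed.

Lemma simple_game_crosses n :
  0 < n -> simple_game (@grid_adj n) (family_game (crosses n)).
Proof.
move=> n_gt0; split=> [|S]; last by rewrite /family_game; case: (S \in _).
split=> [|S|]; rewrite /family_game.
- apply/eqP; rewrite eqb0; apply/negP => /imsetP [i _ /setP /(_ (i, i))].
  by rewrite mem_cross_diag inE.
- by case: (boolP (S \in crosses n)) => // /imsetP [i _ ->]; rewrite cross_connected.
- by exists (cross (Ordinal n_gt0)); rewrite imset_f.
Qed.

Lemma rho_crosses n : 0 < n -> rho (family_game (crosses n)) = 1.
Proof.
by move=> n_gt0; rewrite rho_family_game_meet -?card_gt0 ?card_crosses //; exact: crosses_meet.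
Qed.

(* [k + 1] is computed in 'Z_(m+2), so the superdiagonal wraps around. *)
Definition superdiag m : {set grid_V m.+2} := [set (k, k + 1)%R | k : 'I_m.+2].

Lemma card_superdiag m : #|superdiag m| = m.+2.
Proof. by rewrite card_imset ?card_ord // => i j []. Qed.

Lemma superdiag_meets_cross_twice m (i : 'I_m.+2) : 1 < #|superdiag m :&: cross i|.
Proof.
apply/card_gt1P; exists (i, i + 1)%R, (i - 1, i)%R; rewrite !inE /= !eqxx ?orbT !andbT.
split; [exact: imset_f | by apply/imsetP; exists (i - 1)%R; rewrite ?subrK |].
apply/negP => /eqP [/(congr1 (fun k => i - k)%R)].
by rewrite subrr opprB addrC subrK => /eqP; rewrite eq_sym oner_eq0.
Qed.
Local Open Scope ring_scope.

Lemma is_rho_f_dual (T : finType) (v : {set T} -> nat)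
    (y : {ffun {set T} -> rat}) (z : T -> rat) :
  frac_packing y -> (forall x, 0 <= z x) ->
  (forall S, (v S)%:R <= \sum_(x in S) z x) ->
  frac_value v y = \sum_x z x -> is_rho_f v (\sum_x z x).
Proof.
move=> y_pack z_ge0 z_cover y_val; split; first by exists y.
move=> y' [y'_ge0 y'_le1]; rewrite /frac_value.
apply: le_trans (ler_sum _ (fun S _ => ler_wpM2r (y'_ge0 S) (z_cover S))) _.
under eq_bigr do rewrite mulr_suml big_mkcond.
rewrite exchange_big /=; apply: ler_sum => x _.
by rewrite -big_mkcond /= -mulr_sumr -[leRHS]mulr1 ler_wpM2l.
Qed.

Lemma sum_if_mem (T : finType) (P : pred T) (A : {set T}) (c : rat) :
  \sum_(x | P x) (if x \in A then c else 0) = #|[set x in A | P x]|%:R * c.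
Proof.
rewrite -big_mkcondr /= -sum1_card natr_sum mulr_suml.
by apply: eq_big => [x|x _]; rewrite ?mul1r // !inE andbC.
Qed.

(* Weight c on the members of W is a fractional packing and weight d on the points of P a
   dual cover; equal values certify that both are optimal. *)
Lemma is_rho_f_family_game (T : finType) (W : {set {set T}}) (P : {set T})
    (c d : rat) :
  0 <= c -> 0 <= d ->
  (forall x, #|[set S in W | x \in S]|%:R * c <= 1) ->
  (forall S, S \in W -> 1 <= #|P :&: S|%:R * d) ->
  #|W|%:R * c = #|P|%:R * d ->
  is_rho_f (family_game W) (#|P|%:R * d).
Proof.
move=> c_ge0 d_ge0 y_pack z_cover values_eq.
pose y : {ffun {set T} -> rat} := [ffun S => if S \in W then c else 0].
pose z x : rat := if x \in P then d else 0.
have z_sum : \sum_x z x = #|P|%:R * d.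
  by rewrite sum_if_mem; congr (_%:R * _); apply: eq_card => x; rewrite !inE andbT.
rewrite -z_sum; apply: (@is_rho_f_dual _ _ y).
- split=> [S|x]; first by rewrite ffunE; case: ifP.
  under eq_bigr do rewrite ffunE.
  by rewrite sum_if_mem.
- by move=> x; rewrite /z; case: ifP.
- move=> S; rewrite /family_game /z (sum_if_mem (mem S)).
  by case: (boolP (S \in W)) => [/z_cover|_]; rewrite ?mulr_ge0.
rewrite z_sum -values_eq /frac_value (eq_bigr (fun S => if S \in W then c else 0)).
  by rewrite sum_if_mem; congr (_%:R * _); apply: eq_card => S; rewrite !inE andbT.
by move=> S _; rewrite ffunE /family_game; case: (S \in W); rewrite ?mul1r ?mul0r.
Qed.

Lemma rho_f_crosses_ge n : (0 < n)%N ->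
  exists2 rf, is_rho_f (family_game (crosses n)) rf & n%:R / 2 <= rf.
Proof.
case: n => [//|[_|m _]].
  (* In R_1 the only cross is a single vertex, so rho^f = 1 rather than 1/2. *)
  have card_grid1 : #|[set: grid_V 1]| = 1%N by rewrite cardsT card_prod card_ord.
  exists (#|[set: grid_V 1]|%:R * 1); last by rewrite card_grid1; lra.
  apply: (is_rho_f_family_game (c := 1)); rewrite ?card_crosses ?card_grid1 //.
    move=> x; rewrite mulr1 lern1 -[X in (_ <= X)%N](card_crosses 1).
    rewrite subset_leq_card //.
    by apply/subsetP => S; rewrite inE => /andP [].
  move=> S /imsetP [i _ ->].
  rewrite mulr1 setTI ler1n card_gt0; apply/set0Pn.
  by exists (i, i); exact: mem_cross_diag.
exists (#|superdiag m|%:R * 2^-1); last by rewrite card_superdiag; lra.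
apply: (is_rho_f_family_game (c := 2^-1)); rewrite ?card_crosses ?card_superdiag //.
- by move=> x; have := card_crosses_at x; rewrite -(ler_nat rat) => ?; lra.
- move=> S /imsetP [i _ ->]; have := superdiag_meets_cross_twice i.
  by rewrite -(ler_nat rat) => ?; lra.
Qed.

Theorem lemma5p2 (n : nat) (hn : (0 < n)%N) :
  exists v : {set grid_V n} -> nat,
    simple_game (@grid_adj n) v /\
    exists rf : rat,
      is_rho_f v rf /\
      ((thicket_number (@grid_adj n))%:R / 2 <= rf / (rho v)%:R)%R.
Proof.
exists (family_game (crosses n)); split; first exact: simple_game_crosses.
have [rf rf_opt rf_ge] := rho_f_crosses_ge hn.
exists rf; split => //; rewrite rho_crosses // divr1.
apply: le_trans rf_ge; rewrite ler_pM2r ?invr_gt0 ?ltr0n // ler_nat.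
exact: thicket_number_grid_le.
Qed.
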